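(* Let $(X,\tau)$ be a $T_1$ topological space. Then $X$ is a D-space if and only if the following holds: for every continuous map $f:(X,\tau)\to(\mathcal P(X),\tau_{\mathcal S(X)})$ with $x\in f(x)$ for all $x\in X$, there exist a continuous neighborhood refinement map $f_*:(X,\tau)\to(\mathcal P(X),\tau_{\mathcal S(X)})$ of $f$ and a set $D\subseteq X$ such that: (1) the map $\mathcal I:(D,\tau_D)\to(\mathcal P(D),\tau_{\mathcal S(D)})$, $\mathcal I(d)=\{d\}$, where $\tau_D$ is the subspace topology on $D$, is an injective continuous map; (2) the map $g:(X,\tau)\to(\mathcal P(D),\tau_{\mathcal S(D)})$, $g(x)=f_*(x)\cap D$, is continuous and $g^{-1}(\{\emptyset\})=\emptyset$; (3) the diagonal $\{(d,d): d\in D\}$ is contained in the pullback of $g$ and $\mathcal I$ in the category of topological spaces, i.e. in $P=\{(x,d)\in X\times D: g(x)=\mathcal I(d)\}$ (a subspace of the product $X\times D$); equivalently, $g(d)=\{d\}$ for all $d\in D$.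
   Context: For a set $A$ and $a\in A$, let $\mathcal U_A(a)=\{B\subseteq A: a\in B\}$ (the principal ultrafilter generated by $a$). The principal ultrafilter topology $\tau_{\mathcal S(A)}$ on the power set $\mathcal P(A)$ is the topology generated by the subbase $\{\mathcal U_A(a): a\in A\}$. Given a continuous map $f:(X,\tau)\to(\mathcal P(X),\tau_{\mathcal S(X)})$ with $x\in f(x)$ for all $x$, a continuous neighborhood refinement map of $f$ is a continuous map $f_*:(X,\tau)\to(\mathcal P(X),\tau_{\mathcal S(X)})$ with $x\in f_*(x)\subseteq f(x)$ for all $x\in X$. An open neighborhood assignment on $(X,\tau)$ is a function $N:X\to\tau$ with $x\in N(x)$ for all $x$. A space $(X,\tau)$ is a D-space if for every open neighborhood assignment $N$ there is a closed discrete set $D\subseteq X$ with $\bigcup_{d\in D}N(d)=X$. *)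

From HB Require Import structures.
From mathcomp Require Import all_boot all_order.
From mathcomp Require Import all_classical topology.
From Stdlib Require List.

Set Implicit Arguments.
Unset Strict Implicit.
Unset Printing Implicit Defensive.

Local Open Scope classical_set_scope.

Definition pu (A : Type) (a : A) : set (set A) := [set B | B a].

(* Open sets of the principal ultrafilter topology τ_{S(A)} on P(A) = set A:
   the topology generated by the subbase {U_A(a) | a ∈ A}, i.e. unions of
   finite intersections of subbasic sets (the empty intersection being P(A)). *)
Definition pu_open (A : Type) : set (set (set A)) :=
  [set W | forall B, W B -> exists s : list A,
     (forall a, List.In a s -> pu a B) /\
     (forall C, (forall a, List.In a s -> pu a C) -> W C)].

Arguments pu_open A _ : clear implicits.

Definition cont (S T : Type) (opS : set (set S)) (opT : set (set T))
  (h : S -> T) : Prop :=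
  forall W, opT W -> opS (h @^-1` W).

Definition subsp_open (X : topologicalType) (D : set X) : set (set {x : X | D x}) :=
  [set U | exists V : set X, open V /\ U = (@sval X D) @^-1` V].

Arguments subsp_open {X} D _.

Definition closed_discrete (X : topologicalType) (D : set X) : Prop :=
  closed D /\ forall d, D d -> exists V : set X, open V /\ V `&` D = [set d].

Definition D_space (X : topologicalType) : Prop :=
  forall N : X -> set X, (forall x, open (N x) /\ N x x) ->
  exists D : set X, closed_discrete D /\ \bigcup_(d in D) N d = setT.

Definition nbhd_refinement (X : topologicalType) (f fs : X -> set X) : Prop :=
  cont open (pu_open X) fs /\ (forall x, fs x x /\ fs x `<=` f x).

From HB Require Import structures.
From mathcomp Require Import all_boot all_order.
From mathcomp Require Import all_classical topology.
From Stdlib Require List.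

Set Implicit Arguments.
Unset Strict Implicit.

Local Open Scope classical_set_scope.

(* A map h into P(A) is continuous exactly when every {x | a ∈ h x} is open,
   so a continuous f with x ∈ f x is the open neighbourhood assignment
   a ↦ {x | a ∈ f x}.  Given a closed discrete kernel D of it, remove from f x,
   for x ∈ D, every other point of D; this stays continuous because D minus an
   open set isolating a point of D is closed.  Conversely, g(x) ≠ ∅ and
   g(d) = {d} say that every point sees a point of D and points of D see only
   themselves; then the sets {x | d ∈ f_* x} isolate the points of D, and in a
   T1 space each point off D has a neighbourhood missing D. *)

Lemma open_of_open_subset (T : topologicalType) (A : set T) :
  (forall x, A x -> exists B, open B /\ B x /\ B `<=` A) -> open A.
Proof.
move=> Aloc; rewrite openE => x /Aloc [B [oB [Bx BA]]].
by apply: (filterS BA); apply: open_nbhs_nbhs.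
Qed.

Lemma open_list_forall (T : topologicalType) (A : Type) (P : T -> A -> Prop) :
  (forall a, open [set x | P x a]) ->
  forall s, open [set x | forall a, List.In a s -> P x a].
Proof.
move=> oP; elim => [|a s IHs].
  rewrite (_ : [set x | _] = setT); first exact: openT.
  by apply/seteqP; split=> x // _ a [].
rewrite (_ : [set x | _] = [set x | P x a] `&` [set x | forall b, List.In b s -> P x b]).
  exact: openI.
apply/seteqP; split=> x /=; first by move=> Px; split=> [|b sb]; apply: Px; [left|right].
by move=> [Pxa Pxs] b [<-|sb] //; apply: Pxs.
Qed.

Lemma cont_puP (T : topologicalType) (A : Type) (h : T -> set A) :
  cont open (pu_open A) h <-> forall a, open [set x | h x a].
Proof.
split=> [hcont a | oh W oW].
  apply: (hcont (pu a)) => B Ba.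
  by exists [:: a]; split=> [b [<-|[]]|C HC] //; apply: HC; left.
apply: open_of_open_subset => x /oW [s [sx sW]].
exists [set y | forall a, List.In a s -> h y a]; split.
  exact: (@open_list_forall _ _ (fun y a => h y a)).
by split=> [a /sx|y sy] //; apply: sW => a /sy.
Qed.

Lemma subsp_open_discrete (X : topologicalType) (D : set X) :
  (forall d, D d -> exists V, open V /\ V `&` D = [set d]) ->
  forall U : set {x : X | D x}, subsp_open D U.
Proof.
move=> Ddisc U.
pose V (d : {x : X | D x}) := projT1 (cid (Ddisc _ (svalP d))).
have [oV VD] : (forall d, open (V d)) /\ (forall d, V d `&` D = [set sval d]).
  by split=> d; rewrite /V; case: cid => /= W [].
exists (\bigcup_(d in U) V d); split; first exact: bigcup_open.
apply/seteqP; split=> [y Uy | y [d Ud Vdy]] /=.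
  by exists y => //; have : [set sval y] (sval y) by []; rewrite -VD => -[].
have : (V d `&` D) (sval y) by split => //; exact: svalP.
rewrite VD; case: y {Vdy} => y Dy; case: d Ud => x Dx Ud /= yx.
by rewrite (eq_exist Dy Dx yx).
Qed.

Lemma preimage_set0_eq0P (S T : Type) (h : S -> set T) :
  h @^-1` [set set0] = set0 <-> forall x, h x !=set0.
Proof.
split=> [h0 x | hne].
  apply: contrapT => /set0P/negP/negPn/eqP hx0.
  by have : (h @^-1` [set set0]) x by []; rewrite h0.
by apply/seteqP; split=> x // /= hx0; have [y] := hne x; rewrite hx0.
Qed.

Section KernelRefinement.

Variables (X : topologicalType) (f : X -> set X) (D : set X).

Definition kernel_refinement (x : X) : set X :=
  [set a | f x a /\ (D a -> D x -> x = a)].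

Lemma open_kernel_refinement : closed_discrete D ->
  (forall a, open [set x | f x a]) -> forall a, open [set x | kernel_refinement x a].
Proof.
move=> [cD Ddisc] fopen a; have [Da | nDa] := pselect (D a); last first.
  rewrite (_ : [set x | _] = [set x | f x a]) //.
  by apply/seteqP; split=> x /= => [[]//|fxa]; split=> // /nDa.
have [V [oV VD]] := Ddisc a Da.
rewrite (_ : [set x | _] = [set x | f x a] `&` ~` (D `&` ~` V)).
  by apply: openI => //; apply: closed_openC; apply: closedI; rewrite ?closedC.
apply/seteqP; split=> x [fxa isol]; split=> //.
  move=> [Dx nVx]; apply: nVx; have : [set a] x by rewrite (isol Da Dx).
  by rewrite -VD => -[].
move=> _ Dx; have : (V `&` D) x by split=> //; apply: contrapT => nVx; exact: isol.
by rewrite VD.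
Qed.

Lemma kernel_refinement_meets : (forall x, f x x) ->
  \bigcup_(d in D) [set x | f x d] = setT ->
  forall x, exists2 d, D d & kernel_refinement x d.
Proof.
move=> frefl cover x; have [Dx | nDx] := pselect (D x); first by exists x.
have : (setT : set X) x by []; rewrite -cover => -[d Dd fxd].
by exists d => //; split=> // _ /nDx.
Qed.

Lemma kernel_refinement_set1 (d : {x : X | D x}) : f (sval d) (sval d) ->
  [set e : {x : X | D x} | kernel_refinement (sval d) (sval e)] = [set d].
Proof.
move=> fdd; apply/seteqP; split=> [[e De] [_ isol] | e ->] //=.
by case: d fdd isol => x Dx /= _ isol; apply: eq_exist; symmetry; exact: isol.
Qed.

End KernelRefinement.

Lemma closed_discrete_of_refinement (X : topologicalType) (D : set X)
    (fs : X -> set X) : accessible_space X ->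
  (forall d, open [set x | fs x d]) -> (forall d, D d -> fs d d) ->
  (forall x, exists2 d, D d & fs x d) ->
  (forall d d', D d -> D d' -> fs d' d -> d = d') -> closed_discrete D.
Proof.
move=> T1 ofs fsrefl meets isol; split.
  rewrite -openC; apply: open_of_open_subset => x nDx.
  have [d Dd fsxd] := meets x.
  exists ([set y | fs y d] `&` ~` [set d]); split.
    by apply: openI => //; apply: closed_openC; exact: accessible_closed_set1.
  split; first by split=> //= xd; apply: nDx; rewrite xd.
  by move=> y [fsyd nyd] Dy; apply: nyd; rewrite /= (isol _ _ Dd Dy fsyd).
move=> d Dd; exists [set y | fs y d]; split=> //.
apply/seteqP; split=> [y [fsyd Dy] | y ->] /=; first by rewrite (isol _ _ Dd Dy fsyd).
by split=> //; exact: fsrefl.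
Qed.

Theorem mainTheorem1 (X : topologicalType) (hT1 : @accessible_space X) :
  D_space X <->
  (forall f : X -> set X, cont open (pu_open X) f -> (forall x, f x x) ->
   exists fs : X -> set X, nbhd_refinement f fs /\
   exists D : set X,
     (injective (fun d : {x : X | D x} => [set d]) /\
      cont (subsp_open D) (pu_open {x : X | D x})
           (fun d : {x : X | D x} => [set d])) /\
     (cont open (pu_open {x : X | D x})
           (fun x => [set d : {x : X | D x} | fs x (sval d)]) /\
      (fun x => [set d : {x : X | D x} | fs x (sval d)]) @^-1` [set set0]
        = set0) /\
     ([set p : X * {x : X | D x} | exists d : {x : X | D x}, p = (sval d, d)]
        `<=` [set p : X * {x : X | D x} |
               [set d : {x : X | D x} | fs p.1 (sval d)] = [set p.2]])).
Proof.
split=> [DX f /cont_puP fopen frefl | refines N oN].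
  have [D [DD cover]] :=
    DX (fun a => [set x | f x a]) (fun a => conj (fopen a) (frefl a)).
  have ofs := open_kernel_refinement DD fopen.
  exists (kernel_refinement f D); split.
    by split=> [|x]; [apply/cont_puP | split=> [|a []]].
  exists D; split; [split|split; [split|]].
  - by move=> d e /(congr1 (@^~ d)) /= <-.
  - by move=> W _; exact: subsp_open_discrete DD.2 _.
  - by apply/cont_puP => d; exact: ofs.
  - apply/preimage_set0_eq0P => x.
    by have [d Dd fsxd] := kernel_refinement_meets frefl cover x; exists (exist _ d Dd).
  - by move=> _ [d ->]; exact: kernel_refinement_set1.
have fcont : cont open (pu_open X) (fun x => [set a | N a x]).
  by apply/cont_puP => a; exact: (oN a).1.
have [fs [[/cont_puP ofs fs_sub] [D [_ [[_ /preimage_set0_eq0P fs_ne] diag]]]]] :=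
  refines _ fcont (fun x => (oN x).2).
have meets x : exists2 d, D d & fs x d by have [[d Dd] fsxd] := fs_ne x; exists d.
have isol d d' : D d -> D d' -> fs d' d -> d = d'.
  move=> Dd Dd' fsd'd.
  have := diag (d', exist _ d' Dd') (ex_intro _ (exist _ d' Dd') erefl).
  move=> /(congr1 (@^~ (exist _ d Dd))) /= fsd'_D.
  by move: fsd'd; rewrite fsd'_D => /(congr1 sval).
exists D; split.
  by apply: closed_discrete_of_refinement ofs _ meets isol => // d _; exact: (fs_sub d).1.
apply/seteqP; split=> // x _; have [d Dd fsxd] := meets x.
by exists d => //; exact: (fs_sub x).2.
Qed.
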